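(* Let $k$ be a field of characteristic $0$ and let $\mathcal L$ be a Lie torus of type $(\Delta,\Lambda)$ over $k$. Suppose $\alpha,\beta\in\Delta^\times$ satisfy $\langle\beta,\alpha^\vee\rangle<0$, and let $0\neq x_\alpha\in\mathcal L_\alpha$ and $0\neq y_\beta\in\mathcal L_\beta$. Then $\mathrm{ad}(x_\alpha)^{-\langle\beta,\alpha^\vee\rangle}\,y_\beta\neq 0$.
   Context: An irreducible finite root system in a finite-dimensional $k$-vector space $\mathcal X$ is a finite subset $\Delta\subset\mathcal X$ with $0\in\Delta$ such that $\Delta^\times:=\Delta\setminus\{0\}$ is an irreducible (possibly non-reduced) finite root system in $\mathcal X$ in the usual sense. Write $Q=\mathrm{span}_{\mathbb Z}(\Delta)$, $\alpha^\vee$ for the coroot of $\alpha\in\Delta^\times$, $\langle\beta,\alpha^\vee\rangle$ for the natural pairing, and $\Delta^\times_{\mathrm{ind}}=\Delta^\times\setminus 2\Delta^\times$. Let $\Lambda$ be a finitely generated free abelian group. A Lie torus of type $(\Delta,\Lambda)$ is a Lie algebra $\mathcal L$ over $k$ with a $Q\times\Lambda$-grading $\mathcal L=\bigoplus_{(\alpha,\lambda)\in Q\times\Lambda}\mathcal L_\alpha^\lambda$ (with $\mathcal L_\alpha:=\bigoplus_\lambda\mathcal L_\alpha^\lambda$ and $\mathcal L^\lambda:=\bigoplus_\alpha\mathcal L_\alpha^\lambda$) such that: (LT1) $\{\alpha\in Q:\mathcal L_\alpha\neq0\}=\Delta$; (LT2)(i) $\mathcal L_\alpha^0\neq 0$ for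 all $\alpha\in\Delta^\times_{\mathrm{ind}}$; (ii) whenever $\alpha\in\Delta^\times$, $\lambda\in\Lambda$ and $\mathcal L_\alpha^\lambda\neq0$, there exist $e\in\mathcal L_\alpha^\lambda$, $f\in\mathcal L_{-\alpha}^{-\lambda}$ with $\mathcal L_\alpha^\lambda=ke$, $\mathcal L_{-\alpha}^{-\lambda}=kf$ and $[[e,f],x]=\langle\beta,\alpha^\vee\rangle x$ for all $x\in\mathcal L_\beta$, $\beta\in Q$; (LT3) $\mathcal L$ is generated as an algebra by the spaces $\mathcal L_\alpha$, $\alpha\in\Delta^\times$; (LT4) $\Lambda$ is generated as a group by $\{\lambda\in\Lambda:\mathcal L^\lambda\neq0\}$. *)

From HB Require Import structures.
From mathcomp Require Import all_boot all_order all_algebra.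
Set Implicit Arguments. Unset Strict Implicit. Unset Printing Implicit Defensive.
Import GRing.Theory.
Local Open Scope ring_scope.

Definition is_lie_bracket (k : fieldType) (L : lmodType k) (br : L -> L -> L) :=
  [/\ (forall (c : k) (x y z : L), br (c *: x + y) z = c *: br x z + br y z),
      (forall (c : k) (x y z : L), br z (c *: x + y) = c *: br z x + br z y),
      (forall x : L, br x x = 0) &
      (forall x y z : L, br x (br y z) + br y (br z x) + br z (br x y) = 0)].

Definition nzroots (k : fieldType) (X : vectType k) (D : seq X) : seq X :=
  [seq a <- D | a != 0].

Definition indroots (k : fieldType) (X : vectType k) (D : seq X) : seq X :=
  [seq a <- nzroots D | a \notin map (fun b => 2%:R *: b) (nzroots D)].

(* D (containing 0) is an irreducible finite root system in X, with coroot      *)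
(* pairing  cor a b = <b, a^v>  (cor a is the linear form a^v on X).            *)
Definition irr_root_system (k : fieldType) (X : vectType k) (D : seq X)
    (cor : X -> X -> k) :=
  [/\ 0 \in D,
      (<<nzroots D>>%VS = fullv),
      (forall a, a \in nzroots D ->
         [/\ (forall (c : k) (x y : X), cor a (c *: x + y) = c * cor a x + cor a y),
             cor a a = 2%:R,
             (forall b, b \in nzroots D -> b - cor a b *: a \in nzroots D) &
             (forall b, b \in nzroots D -> exists z : int, cor a b = z%:~R)]),
      nzroots D != [::] &
      ~ (exists P : pred X,
           [/\ (exists2 a, a \in nzroots D & P a),
               (exists2 b, b \in nzroots D & ~~ P b) &
               (forall a b, a \in nzroots D -> b \in nzroots D -> P a -> ~~ P b ->
                  cor a b = 0)])].

(* G a l is the homogeneous component L_a^l (as a predicate on L).              *)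
Definition is_subspace (k : fieldType) (L : lmodType k) (S : L -> Prop) :=
  S 0 /\ (forall (c : k) x y, S x -> S y -> S (c *: x + y)).

Definition is_direct_sum_grading (k : fieldType) (L : lmodType k)
    (I J : eqType) (G : I -> J -> L -> Prop) :=
  [/\ (forall i j, is_subspace (G i j)),
      (forall x : L, exists s : seq ((I * J) * L),
         [/\ uniq (map fst s), (forall p, p \in s -> G p.1.1 p.1.2 p.2) &
             x = \sum_(p <- s) p.2]) &
      (forall s : seq ((I * J) * L),
         uniq (map fst s) -> (forall p, p \in s -> G p.1.1 p.1.2 p.2) ->
         \sum_(p <- s) p.2 = 0 -> forall p, p \in s -> p.2 = 0)].

Definition rootspace (k : fieldType) (L : lmodType k) (I J : eqType)
    (G : I -> J -> L -> Prop) (a : I) (x : L) :=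
  exists s : seq (J * L), (forall p, p \in s -> G a p.1 p.2) /\ x = \sum_(p <- s) p.2.

Definition degspace (k : fieldType) (L : lmodType k) (I J : eqType)
    (G : I -> J -> L -> Prop) (l : J) (x : L) :=
  exists s : seq (I * L), (forall p, p \in s -> G p.1 l p.2) /\ x = \sum_(p <- s) p.2.

(* Lambda = Z^n (a finitely generated free abelian group).  The Q-grading is    *)
(* encoded by indexing over all of X (components outside Q are 0 by LT1).       *)
Record is_lie_torus (k : fieldType) (X : vectType k) (D : seq X)
    (cor : X -> X -> k) (n : nat) (L : lmodType k) (br : L -> L -> L)
    (G : X -> 'rV[int]_n -> L -> Prop) : Prop := {
  lt_lie : is_lie_bracket br;
  lt_grading : is_direct_sum_grading G;
  lt_bracket : forall a b l m x y, G a l x -> G b m y -> G (a + b) (l + m) (br x y);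
  lt1 : forall a : X, (exists x, rootspace G a x /\ x <> 0) <-> a \in D;
  lt2i : forall a, a \in indroots D -> exists x, G a 0 x /\ x <> 0;
  lt2ii : forall a l, a \in nzroots D -> (exists x, G a l x /\ x <> 0) ->
         exists e f,
           [/\ G a l e, G (- a) (- l) f,
               (forall z, G a l z <-> exists c : k, z = c *: e),
               (forall z, G (- a) (- l) z <-> exists c : k, z = c *: f) &
               (forall b x, rootspace G b x -> br (br e f) x = cor a b *: x)];
  lt3 : forall S : L -> Prop, is_subspace S ->
         (forall x y, S x -> S y -> S (br x y)) ->
         (forall a x, a \in nzroots D -> rootspace G a x -> S x) ->
         forall x, S x;
  lt4 : forall H : 'rV[int]_n -> Prop,
         H 0 -> (forall l m, H l -> H m -> H (l - m)) ->
         (forall l, (exists x, degspace G l x /\ x <> 0) -> H l) ->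
         forall l, H l }.

From HB Require Import structures.
From mathcomp Require Import all_boot all_order all_algebra.
From mathcomp Require Import ring.
Import Order.TTheory GRing.Theory Num.Theory.
Set Implicit Arguments. Unset Strict Implicit. Unset Printing Implicit Defensive.
Local Open Scope ring_scope.

(* Order Lambda = Z^n lexicographically, compatibly with addition, and split
   x and y into their leading Lambda-components x0 in L_a^l0, y0 in L_b^m0 plus
   lower terms.  The leading component of ad(x)^m y is then ad(x0)^m y0, so by
   directness of the grading it suffices that ad(x0)^m y0 <> 0.  By LT2(ii),
   x0 is a nonzero multiple of e in an sl2-triple (e, h, f) with f in L_-a^-l0,
   h acting on L_g by <g, a^v>; ad f is locally nilpotent on homogeneous
   elements because a-strings of roots are finite.  The usual sl2 argument then
   shows that ad(e)^m kills no nonzero vector of h-weight -m. *)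

Section LexOrder.
Variable n : nat.
Implicit Types u v w : 'rV[int]_n.

Definition lexpos w :=
  [exists i : 'I_n, [forall j : 'I_n, (j < i)%N ==> (w ord0 j == 0)] && (0 < w ord0 i)].

Definition lexlt u v := lexpos (v - u).

Lemma lexposP w :
  reflect (exists i : 'I_n, (forall j : 'I_n, (j < i)%N -> w ord0 j = 0) /\ 0 < w ord0 i)
          (lexpos w).
Proof.
apply: (iffP existsP) => [[i /andP [/forallP low pos]] | [i [low pos]]].
  by exists i; split=> // j ji; apply/eqP/(implyP (low j)).
by exists i; rewrite pos andbT; apply/forallP => j; apply/implyP => /low ->.
Qed.

Lemma lexposD u v : lexpos u -> lexpos v -> lexpos (u + v).
Proof.
move=> /lexposP [i [ui ui0]] /lexposP [j [vj vj0]]; apply/lexposP.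
have [ij | ji | /val_inj eij] := ltngtP i j.
- exists i; split=> [t ti|]; last by rewrite !mxE vj // addr0.
  by rewrite !mxE ui // vj ?addr0 // (ltn_trans ti).
- exists j; split=> [t tj|]; last by rewrite !mxE ui // add0r.
  by rewrite !mxE vj // ui ?addr0 // (ltn_trans tj).
- subst j; exists i; split=> [t ti|]; last by rewrite !mxE addr_gt0.
  by rewrite !mxE ui // vj ?addr0.
Qed.

Lemma lexpos0 : ~~ lexpos 0.
Proof. by apply/lexposP => -[i [_]]; rewrite mxE ltxx. Qed.

Lemma lexpos_total w : w != 0 -> lexpos w || lexpos (- w).
Proof.
move=> w0; have [j0 wj0] : exists j, w ord0 j != 0.
  apply/existsP; apply: contraR w0 => /existsPn w0.
  by apply/eqP/matrixP => i j; rewrite ord1 mxE; apply/eqP/negPn.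
have [i wi0 imin] := @arg_minnP _ j0 (fun j => w ord0 j != 0) (fun j : 'I_n => val j) wj0.
have low (j : 'I_n) : (j < i)%N -> w ord0 j = 0.
  by apply: contraTeq => /imin; rewrite leqNgt.
case: (ltgtP 0 (w ord0 i)) => [pos | neg | /esym wi]; last by rewrite wi eqxx in wi0.
  by apply/orP; left; apply/lexposP; exists i.
apply/orP; right; apply/lexposP; exists i; rewrite mxE oppr_gt0; split=> // j ji.
by rewrite mxE low ?oppr0.
Qed.

Lemma lexlt_irr u : ~~ lexlt u u.
Proof. by rewrite /lexlt subrr lexpos0. Qed.

Lemma lexlt_trans v u w : lexlt u v -> lexlt v w -> lexlt u w.
Proof. by rewrite /lexlt => uv /lexposD /(_ uv); rewrite addrA subrK. Qed.

Lemma lexlt_total u v : u != v -> lexlt u v || lexlt v u.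
Proof.
by move=> uv; rewrite /lexlt -[u - v]opprB lexpos_total // subr_eq0 eq_sym.
Qed.

Lemma lexltD u v u' v' : lexlt u v -> lexlt u' v' -> lexlt (u + u') (v + v').
Proof. by rewrite /lexlt opprD addrACA; apply: lexposD. Qed.

Lemma lexltDr w u v : lexlt u v -> lexlt (u + w) (v + w).
Proof. by rewrite /lexlt opprD addrACA subrr addr0. Qed.

Lemma lexltDl w u v : lexlt u v -> lexlt (w + u) (w + v).
Proof. by rewrite ![w + _]addrC; apply: lexltDr. Qed.

Lemma exists_lexmax (s : seq 'rV[int]_n) :
  s != [::] -> exists2 l, l \in s & forall l', l' \in s -> l' != l -> lexlt l' l.
Proof.
elim: s => // l s IHs _; have [-> | /IHs [l1 l1s l1max]] := eqVneq s [::].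
  by exists l => [|l']; rewrite !inE // => ->.
have [ll1 | ll1] := boolP (lexlt l l1).
  exists l1 => [|l']; first by rewrite inE l1s orbT.
  by rewrite inE => /orP [/eqP -> _ | /l1max].
have l1l : l1 = l \/ lexlt l1 l.
  have [-> | l1l] := eqVneq l1 l; [by left | right].
  by have := lexlt_total l1l; rewrite (negbTE ll1) orbF.
exists l => [|l']; first exact: mem_head.
rewrite inE => /orP [/eqP -> /eqP // | l's l'l].
case: l1l => [l1l | l1l]; first by rewrite -l1l; apply: l1max; rewrite ?l1l.
have [-> // | l'l1] := eqVneq l' l1.
exact: lexlt_trans (l1max _ l's l'l1) l1l.
Qed.

End LexOrder.

Arguments lexlt {n}.

Lemma mulrIn_pchar0 (k : fieldType) (V : lmodType k) (a : V) :
  [pchar k] =i pred0 -> a != 0 -> injective (GRing.natmul a).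
Proof.
move=> hk a0; suff le_inj i j : (i <= j)%N -> a *+ i = a *+ j -> i = j.
  by move=> i j; case: (leqP i j) => [|/ltnW] /le_inj // eqij /esym /eqij.
move=> ij; rewrite -(subnKC ij) mulrnDr -{1}[a *+ i]addr0 => /addrI /esym /eqP.
by rewrite -scaler_nat scaler_eq0 (negbTE a0) orbF (pcharf0P _).1 // => /eqP ->; rewrite addn0.
Qed.

Section LieBracket.
Variables (k : fieldType) (L : lmodType k) (br : L -> L -> L).
Hypothesis hbr : is_lie_bracket br.

Lemma brDl u v z : br (u + v) z = br u z + br v z.
Proof. by case: hbr => linl _ _ _; rewrite -[u]scale1r linl !scale1r. Qed.

Lemma brDr z u v : br z (u + v) = br z u + br z v.
Proof. by case: hbr => _ linr _ _; rewrite -[u]scale1r linr !scale1r. Qed.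

Lemma br0l z : br 0 z = 0.
Proof. by apply/(addrI (br 0 z)); rewrite -brDl !addr0. Qed.

Lemma br0r z : br z 0 = 0.
Proof. by apply/(addrI (br z 0)); rewrite -brDr !addr0. Qed.

Lemma brZl c u z : br (c *: u) z = c *: br u z.
Proof. by case: hbr => linl _ _ _; have := linl c u 0 z; rewrite addr0 br0l addr0. Qed.

Lemma brZr c z u : br z (c *: u) = c *: br z u.
Proof. by case: hbr => _ linr _ _; have := linr c u 0 z; rewrite addr0 br0r addr0. Qed.

Lemma br_suml (I : Type) (r : seq I) (F : I -> L) z :
  br (\sum_(i <- r) F i) z = \sum_(i <- r) br (F i) z.
Proof. by elim: r => [|i r IHr]; rewrite ?big_nil ?br0l // !big_cons brDl IHr. Qed.

Lemma br_sumr (I : Type) (r : seq I) (F : I -> L) z :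
  br z (\sum_(i <- r) F i) = \sum_(i <- r) br z (F i).
Proof. by elim: r => [|i r IHr]; rewrite ?big_nil ?br0r // !big_cons brDr IHr. Qed.

Lemma br_anticomm u v : br u v = - br v u.
Proof.
case: hbr => _ _ alt _; apply/eqP; rewrite -addr_eq0; apply/eqP.
by have := alt (u + v); rewrite brDl !brDr !alt add0r addr0.
Qed.

Lemma br_jacobi e f z : br e (br f z) = br f (br e z) + br (br e f) z.
Proof.
case: hbr => _ _ _ jacobi; apply/eqP; rewrite -subr_eq0 opprD addrA; apply/eqP.
have := jacobi e f z.
by rewrite (br_anticomm z e) (br_anticomm z (br e f)) -scaleN1r brZr scaleN1r.
Qed.

Lemma iter_br0 e i : iter i (br e) 0 = 0.
Proof. by elim: i => //= i ->; rewrite br0r. Qed.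

Lemma iter_brZ c e w i : iter i (br (c *: e)) w = c ^+ i *: iter i (br e) w.
Proof. by elim: i => [|i /= ->]; rewrite ?scale1r // brZl brZr scalerA exprS. Qed.

(* W nu w: w is a weight vector of weight nu for the sl2-triple (e, [e, f], f). *)
Section SL2.
Hypothesis hk : [pchar k] =i pred0.
Variables (W : k -> L -> Prop) (e f : L).
Hypothesis W_br_e : forall nu w, W nu w -> W (nu + 2) (br e w).
Hypothesis W_br_f : forall nu w, W nu w -> W (nu - 2) (br f w).
Hypothesis W_br_h : forall nu w, W nu w -> br (br e f) w = nu *: w.
Hypothesis W_f_nilpotent : forall nu w, W nu w -> exists N, iter N (br f) w = 0.

Lemma W_iter_e i nu w : W nu w -> W (nu + i%:R * 2) (iter i (br e) w).
Proof.
elim: i nu w => [|i IHi] nu w Ww /=; first by rewrite mul0r addr0.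
by rewrite -addn1 natrD mulrDl mul1r addrA; apply/W_br_e/IHi.
Qed.

Lemma W_iter_f i nu w : W nu w -> W (nu - i%:R * 2) (iter i (br f) w).
Proof.
elim: i nu w => [|i IHi] nu w Ww /=; first by rewrite mul0r subr0.
by rewrite -addn1 natrD mulrDl mul1r opprD addrA; apply/W_br_f/IHi.
Qed.

Lemma iter_e_br_f i nu w : W nu w ->
  iter i.+1 (br e) (br f w) =
    br f (iter i.+1 (br e) w) + (i.+1%:R * (nu + i%:R)) *: iter i (br e) w.
Proof.
move=> Ww; elim: i => [|i IHi]; first by rewrite /= br_jacobi (W_br_h Ww) mul1r addr0.
rewrite iterS IHi brDr brZr br_jacobi (W_br_h (W_iter_e i.+1 Ww)) -!iterS -addrA -scalerDl.
by congr (_ + _ *: _); rewrite -[i.+2]addn1 -[i.+1]addn1 !natrD; ring.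
Qed.

Lemma iter_e_lowest_neq0 N u : W (- N%:R) u -> br f u = 0 -> u != 0 ->
  forall i, (i <= N)%N -> iter i (br e) u != 0.
Proof.
move=> Wu fu u0; elim=> // i IHi iN; apply: contraTneq (IHi (ltnW iN)) => eiu0.
have coef_neq0 : i.+1%:R * (- N%:R + i%:R) != 0 :> k.
  rewrite addrC -opprB -natrB ?(ltnW iN) // mulrN -natrM oppr_eq0 (pcharf0P _).1 //.
  by rewrite muln_eq0 subn_eq0 -ltnNge iN.
have := iter_e_br_f i Wu; rewrite fu iter_br0 eiu0 br0r add0r => /esym /eqP.
by rewrite scaler_eq0 (negbTE coef_neq0) negbK.
Qed.

Lemma iter_e_iter_f_eq0 m nu v : W nu v -> iter m (br e) v = 0 ->
  forall q, iter (m + q) (br e) (iter q (br f) v) = 0.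
Proof.
move=> Wv emv; elim=> [|q IHq]; first by rewrite addn0.
rewrite addnS [iter q.+1 _ _]iterS (iter_e_br_f _ (W_iter_f q Wv)) iterS IHq.
by rewrite !br0r scaler0 addr0.
Qed.

Lemma iter_e_neq0 m v : W (- m%:R) v -> v != 0 -> iter m (br e) v != 0.
Proof.
move=> Wv v0; apply/eqP => emv.
have [p [fpv0 fpv]] : exists p, iter p (br f) v != 0 /\ br f (iter p (br f) v) = 0.
  have [N] := W_f_nilpotent Wv; elim: N => [/eqP | N IHN fNv]; first by rewrite (negbTE v0).
  by have [/IHN // | fN0] := eqVneq (iter N (br f) v) 0; exists N.
have Wu : W (- (m + p * 2)%:R) (iter p (br f) v).
  by rewrite natrD natrM opprD; apply: W_iter_f.
have := iter_e_lowest_neq0 Wu fpv fpv0 (leq_add (leqnn m) (leq_pmulr p (isT : 0 < 2)%N)).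
by rewrite (iter_e_iter_f_eq0 Wv) ?eqxx.
Qed.

End SL2.
End LieBracket.

Lemma big_undup_fst (K : eqType) (V : nmodType) (s : seq (K * V)) :
  \sum_(p <- s) p.2 = \sum_(i <- undup (map fst s)) \sum_(p <- s | p.1 == i) p.2.
Proof.
rewrite (exchange_big_dep xpredT) //=; apply: eq_big_seq => p ps.
rewrite -big_filter (@eq_filter _ _ (pred1 p.1)) => [|i]; last by rewrite /= eq_sym.
rewrite filter_pred1_uniq ?undup_uniq ?big_seq1 // mem_undup; exact: map_f.
Qed.

Section Grading.
Variables (k : fieldType) (X : eqType) (n : nat) (L : lmodType k).
Variable G : X -> 'rV[int]_n -> L -> Prop.

Definition hom_sum (P : 'rV[int]_n -> Prop) (z : L) :=
  exists s : seq ((X * 'rV[int]_n) * L),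
    (forall p, p \in s -> G p.1.1 p.1.2 p.2 /\ P p.1.2) /\ z = \sum_(p <- s) p.2.

Lemma hom_sum1 (P : 'rV[int]_n -> Prop) g l z : G g l z -> P l -> hom_sum P z.
Proof.
move=> Gz Pl; exists [:: (g, l, z)]; split; last by rewrite big_seq1.
by move=> p; rewrite inE => /eqP ->.
Qed.

Lemma hom_sumD (P : 'rV[int]_n -> Prop) z1 z2 :
  hom_sum P z1 -> hom_sum P z2 -> hom_sum P (z1 + z2).
Proof.
move=> [s1 [Gs1 ->]] [s2 [Gs2 ->]]; exists (s1 ++ s2); split; last by rewrite big_cat.
by move=> p; rewrite mem_cat => /orP [/Gs1 | /Gs2].
Qed.

Lemma hom_sumW (P Q : 'rV[int]_n -> Prop) z :
  (forall l, P l -> Q l) -> hom_sum P z -> hom_sum Q z.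
Proof. by move=> PQ [s [Gs ->]]; exists s; split=> // p /Gs [? /PQ]. Qed.

Hypothesis G_subspace : forall g l, is_subspace (G g l).

Lemma hom_big g l (I : eqType) (r : seq I) (P : pred I) (F : I -> L) :
  (forall i, i \in r -> P i -> G g l (F i)) -> G g l (\sum_(i <- r | P i) F i).
Proof.
have [G0 GD] := G_subspace g l; move=> GF; rewrite big_seq_cond.
apply: (big_ind (G g l)) => // [u v Gu Gv | i /andP []]; last exact: GF.
by rewrite -[u]scale1r; apply: GD.
Qed.

Lemma leading_term g z : rootspace G g z -> z != 0 ->
  exists l0 z0 zr, [/\ G g l0 z0, z0 != 0, hom_sum (lexlt^~ l0) zr & z = z0 + zr].
Proof.
move=> [s [Gs ->]] z0.
pose F l := \sum_(p <- s | p.1 == l) p.2.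
have GF l : G g l (F l) by apply: hom_big => p /Gs Gp /eqP <-.
set K := [seq l <- undup (map fst s) | F l != 0].
have sumK : \sum_(p <- s) p.2 = \sum_(l <- K) F l.
  by rewrite big_undup_fst big_filter [RHS]big_mkcond; apply: eq_bigr => l _; case: eqP.
rewrite sumK in z0 *.
have [|l0 l0K l0max] := @exists_lexmax _ K.
  by apply: contraNneq z0 => ->; rewrite big_nil.
exists l0, (F l0), (\sum_(l <- K | l != l0) F l); split => //.
- by move: l0K; rewrite mem_filter => /andP [].
- exists [seq (g, l, F l) | l <- K & l != l0]; rewrite big_map big_filter; split=> //.
  by move=> p /mapP [l]; rewrite mem_filter => /andP [ll0 lK] ->; split; [|apply: l0max].
- by rewrite (bigD1_seq l0) ?filter_uniq ?undup_uniq.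
Qed.

Hypothesis G_independent : forall s : seq ((X * 'rV[int]_n) * L),
  uniq (map fst s) -> (forall p, p \in s -> G p.1.1 p.1.2 p.2) ->
  \sum_(p <- s) p.2 = 0 -> forall p, p \in s -> p.2 = 0.

Lemma hom_top_eq0 g l z r :
  G g l z -> hom_sum (lexlt^~ l) r -> z + r = 0 -> z = 0.
Proof.
move=> Gz [s [Gs ->]]; rewrite big_undup_fst => zr0.
set K := undup (map fst s); set F := fun i => \sum_(p <- s | p.1 == i) p.2.
apply: (G_independent (s := (g, l, z) :: [seq (i, F i) | i <- K])) (mem_head _ _).
- rewrite /= -map_comp (@eq_map _ _ _ id) // map_id undup_uniq andbT mem_undup.
  apply/mapP => -[p /Gs [_ pl] pgl]; move: pl; rewrite -pgl /=.
  by apply/negP; apply: lexlt_irr.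
- move=> p; rewrite inE => /orP [/eqP -> // | /mapP [i _ ->]].
  by apply: hom_big => q /Gs [Gq _] /eqP <-.
- by rewrite big_cons big_map.
Qed.

End Grading.

Section GradedBracket.
Variables (k : fieldType) (X : zmodType) (n : nat) (L : lmodType k).
Variables (br : L -> L -> L) (G : X -> 'rV[int]_n -> L -> Prop).
Hypothesis hbr : is_lie_bracket br.
Hypothesis G_br : forall a b l m x y, G a l x -> G b m y -> G (a + b) (l + m) (br x y).

Lemma hom_sum_br (P Q R : 'rV[int]_n -> Prop) z1 z2 :
  (forall l l', P l -> Q l' -> R (l + l')) ->
  hom_sum G P z1 -> hom_sum G Q z2 -> hom_sum G R (br z1 z2).
Proof.
move=> PQR [s1 [Gs1 ->]] [s2 [Gs2 ->]].
exists [seq (p.1.1 + q.1.1, p.1.2 + q.1.2, br p.2 q.2) | p <- s1, q <- s2]; split.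
  move=> _ /allpairsP [[p q] /= [/Gs1 [Gp Pp] /Gs2 [Gq Qq] ->]] /=.
  by split; [apply: G_br | apply: PQR].
by rewrite big_allpairs_dep (br_suml hbr); apply: eq_bigr => p _; rewrite br_sumr.
Qed.

(* Bracketing with the lower parts only lowers the lexicographic degree, so the
   leading component of ad(x)^i y is ad(x0)^i y0. *)
Lemma iter_br_leading a b l0 m0 x0 xr y0 yr :
  G a l0 x0 -> hom_sum G (lexlt^~ l0) xr ->
  G b m0 y0 -> hom_sum G (lexlt^~ m0) yr -> forall i,
  G (b + a *+ i) (m0 + l0 *+ i) (iter i (br x0) y0) /\
  exists r, hom_sum G (lexlt^~ (m0 + l0 *+ i)) r /\
            iter i (br (x0 + xr)) (y0 + yr) = iter i (br x0) y0 + r.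
Proof.
move=> Gx0 hxr Gy0 hyr; elim=> [|i [Gt [r [hr er]]]].
  by rewrite !mulr0n !addr0; split; last exists yr.
have lS : m0 + l0 *+ i.+1 = l0 + (m0 + l0 *+ i) by rewrite mulrS addrCA.
split; first by rewrite mulrS addrCA lS; apply: G_br.
exists (br x0 r + br xr (iter i (br x0) y0 + r)); split; last first.
  by rewrite !iterS er brDl // brDr // addrA.
apply: hom_sumD.
  apply: (hom_sum_br (P := eq^~ l0)) hr => [l l' -> | ]; first by rewrite lS; apply: lexltDl.
  by apply: hom_sum1 Gx0 _.
apply: (hom_sum_br (Q := fun l => l = m0 + l0 *+ i \/ lexlt l (m0 + l0 *+ i))) hxr _.
  by move=> l l' ll0 [-> | l'lt]; rewrite lS; [apply: lexltDr | apply: lexltD].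
apply: hom_sumD; first exact: hom_sum1 Gt (or_introl _).
by apply: hom_sumW hr => l; right.
Qed.

End GradedBracket.

Section RootStrings.
Variables (k : fieldType) (X : vectType k) (D : seq X) (cor : X -> X -> k).
Variables (n : nat) (L : lmodType k) (br : L -> L -> L).
Variable G : X -> 'rV[int]_n -> L -> Prop.
Hypothesis hk : [pchar k] =i pred0.
Hypothesis G_br : forall a b l m x y, G a l x -> G b m y -> G (a + b) (l + m) (br x y).
Hypothesis rootspace_support : forall a x, rootspace G a x -> x <> 0 -> a \in D.

(* The degrees g + i a of the iterates are pairwise distinct roots as long as the
   iterates are nonzero, and there are only finitely many roots. *)
Lemma iter_br_nilpotent a l0 f g l w : a != 0 -> G a l0 f -> G g l w ->
  exists N, iter N (br f) w = 0.
Proof.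
move=> a0 Gf Gw.
have Giter i : G (g + a *+ i) (l + l0 *+ i) (iter i (br f) w).
  elim: i => [|i IHi]; first by rewrite !mulr0n !addr0.
  by rewrite !mulrS addrCA [l + _]addrCA; apply: G_br.
have [/hasP [i _ /eqP] | /hasPn iter_neq0] :=
  boolP (has (fun i => iter i (br f) w == 0) (iota 0 (size D).+1)); first by exists i.
have string_in_D : {subset [seq g + a *+ i | i <- iota 0 (size D).+1] <= D}.
  move=> _ /mapP [i /iter_neq0 /eqP iw0 ->]; apply: rootspace_support iw0.
  exists [:: (l + l0 *+ i, iter i (br f) w)]; rewrite big_seq1.
  by split=> // p /[!inE] /eqP ->.
have uniq_string : uniq [seq g + a *+ i | i <- iota 0 (size D).+1].
  by rewrite map_inj_uniq ?iota_uniq // => i j /addrI /(mulrIn_pchar0 hk a0).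
by have := uniq_leq_size uniq_string string_in_D; rewrite size_map size_iota ltnn.
Qed.

Variables (a : X) (e f : L).
Hypothesis cor_linear : forall (c : k) (x y : X), cor a (c *: x + y) = c * cor a x + cor a y.
Hypothesis cor_aa : cor a a = 2.

Definition root_weight (nu : k) (w : L) := exists g l, G g l w /\ cor a g = nu.

Lemma root_weight_br_e l0 nu w :
  G a l0 e -> root_weight nu w -> root_weight (nu + 2) (br e w).
Proof.
move=> Ge [g [l [Gw <-]]]; exists (a + g), (l0 + l); split; first exact: G_br.
by rewrite -{2}[a]scale1r cor_linear cor_aa mul1r addrC.
Qed.

Lemma root_weight_br_f l0 nu w :
  G (- a) l0 f -> root_weight nu w -> root_weight (nu - 2) (br f w).
Proof.
move=> Gf [g [l [Gw <-]]]; exists (- a + g), (l0 + l); split; first exact: G_br.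
by rewrite -scaleN1r cor_linear cor_aa mulN1r addrC.
Qed.

Lemma root_weight_br_h nu w :
  (forall b x, rootspace G b x -> br (br e f) x = cor a b *: x) ->
  root_weight nu w -> br (br e f) w = nu *: w.
Proof.
move=> h_action [g [l [Gw <-]]]; apply: h_action.
by exists [:: (l, w)]; rewrite big_seq1; split=> // p /[!inE] /eqP ->.
Qed.

Lemma root_weight_f_nilpotent l0 nu w : a != 0 -> G (- a) l0 f -> root_weight nu w ->
  exists N, iter N (br f) w = 0.
Proof. by move=> a0 Gf [g [l [Gw _]]]; apply: iter_br_nilpotent Gf Gw; rewrite oppr_eq0. Qed.

End RootStrings.

Theorem lemma3p5 (k : fieldType) (hk : [pchar k] =i pred0)
  (X : vectType k) (D : seq X) (cor : X -> X -> k)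
  (hD : irr_root_system D cor)
  (n : nat) (L : lmodType k) (br : L -> L -> L)
  (G : X -> 'rV[int]_n -> L -> Prop)
  (hL : is_lie_torus D cor br G)
  (a b : X) (ha : a \in nzroots D) (hb : b \in nzroots D)
  (m : nat) (hm : (0 < m)%N) (hab : cor a b = - m%:R)
  (x y : L) (hx : rootspace G a x) (hx0 : x <> 0) (hy : rootspace G b y) (hy0 : y <> 0) :
  iter m (br x) y <> 0.
Proof.
case: hL => hbr [G_subspace _ G_independent] G_br LT1 _ LT2ii _ _.
case: hD => _ _ hcor _ _; have [cor_linear cor_aa _ _] := hcor a ha.
have a0 : a != 0 by move: ha; rewrite mem_filter => /andP [].
have [l0 [x0 [xr [Gx0 x00 hxr ->]]]] := leading_term G_subspace hx (introN eqP hx0).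
have [m0 [y0 [yr [Gy0 y00 hyr ->]]]] := leading_term G_subspace hy (introN eqP hy0).
have [Gt [r [hr ->]]] := iter_br_leading hbr G_br Gx0 hxr Gy0 hyr m.
move=> /(hom_top_eq0 G_subspace G_independent Gt hr) /eqP.
have [e [f [Ge Gf /(_ x0) [/(_ Gx0) [c xc] _] _ h_action]]] :=
  LT2ii a l0 ha (ex_intro _ x0 (conj Gx0 (elimN eqP x00))).
have c0 : c != 0 by apply: contraNneq x00; rewrite xc => ->; rewrite scale0r.
rewrite xc iter_brZ // scaler_eq0 expf_eq0 (negbTE c0) andbF /=; apply/negP.
have rootsupp a' z : rootspace G a' z -> z <> 0 -> a' \in D by move=> *; apply/LT1; exists z.
apply: (iter_e_neq0 hbr hk (W := root_weight cor G a) _ _ _ _ _ y00).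
- by move=> nu w; apply: root_weight_br_e Ge.
- by move=> nu w; apply: root_weight_br_f Gf.
- by move=> nu w; apply: root_weight_br_h.
- by move=> nu w; apply: (root_weight_f_nilpotent hk G_br rootsupp a0 Gf).
- by exists b, m0.
Qed.
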